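(* Let $\mathcal{A},\mathcal{B}$ be standard operator algebras on infinite-dimensional Banach spaces $\mathcal{X},\mathcal{Y}$, and let $\phi:\mathcal{A}\to\mathcal{B}$ be a bijection such that $\phi$ is 2-quadratic preserving in both directions. Then $\phi(0)=0$ and $\phi(\mathbb{F}I)=\mathbb{F}I$; in particular $\phi(I)=\lambda I$ for some scalar $\lambda$.
   Context: A standard operator algebra on $\mathcal{X}$ is a norm-closed subalgebra of $\mathcal{B}(\mathcal{X})$ containing the identity $I$ and all finite-rank operators; $\mathbb{F}\in\{\mathbb{R},\mathbb{C}\}$ is the scalar field. An operator $T$ is quadratic if there exist scalars $a,b$ with $(T-aI)(T-bI)=0$. $\phi_2:\mathcal{A}\otimes M_2\to\mathcal{B}\otimes M_2$ is $\phi_2((a_{ij})_{2\times 2})=(\phi(a_{ij}))_{2\times 2}$, and ''2-quadratic preserving in both directions'' means $T\in\mathcal{A}\otimes M_2$ is quadratic iff $\phi_2(T)$ is quadratic. *)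

From HB Require Import structures.
From mathcomp Require Import all_boot all_order all_algebra.
From mathcomp Require Import complex.
From mathcomp Require Import all_classical all_reals all_analysis.
Set Implicit Arguments. Unset Strict Implicit. Unset Printing Implicit Defensive.
Import Order.TTheory GRing.Theory Num.Theory.
Import numFieldNormedType.Exports.
Local Open Scope ring_scope.
Local Open Scope classical_set_scope.

Definition field_iso (K1 K2 : numFieldType) : Prop :=
  exists f : {rmorphism K1 -> K2}, bijective f /\ forall x : K1, `|f x| = f `|x|.

Definition R_or_C (R : realType) (K : numFieldType) : Prop :=
  field_iso K R \/ field_iso K (R[i])%C.

Section Ops.
Variables (K : numFieldType) (X : normedModType K).

Definition bounded_op (T : X -> X) : Prop :=
  (forall (a : K) (u v : X), T (a *: u + v) = a *: T u + T v) /\ continuous T.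

Definition idop : X -> X := fun x => x.
Definition addop (S T : X -> X) : X -> X := fun x => S x + T x.
Definition scaleop (a : K) (T : X -> X) : X -> X := fun x => a *: T x.
Definition compop (S T : X -> X) : X -> X := fun x => S (T x).

Definition finite_rank (T : X -> X) : Prop :=
  exists n (v : 'I_n -> X), forall x, exists c : 'I_n -> K,
    T x = \sum_(i < n) c i *: v i.

Definition infinite_dimensional : Prop :=
  forall n (v : 'I_n -> X), exists x : X,
    forall c : 'I_n -> K, x <> \sum_(i < n) c i *: v i.

Definition standard_op_alg (A : set (X -> X)) : Prop :=
  (forall T, A T -> bounded_op T) /\
  (forall S T, A S -> A T -> A (addop S T)) /\
  (forall a T, A T -> A (scaleop a T)) /\
  (forall S T, A S -> A T -> A (compop S T)) /\
  A idop /\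
  (forall T, bounded_op T -> finite_rank T -> A T) /\
      (* closed in operator norm *)
  (forall T, bounded_op T ->
        (forall e : K, 0 < e -> exists S, A S /\
            forall x, `|T x - S x| <= e * `|x|) -> A T).

(* operator matrices in A (x) M_2, acting on X (+) X *)
Definition opmx2 := 'I_2 -> 'I_2 -> (X -> X).

Definition mulop2 (M N : opmx2) : opmx2 :=
  fun i j x => \sum_(k < 2) M i k (N k j x).

Definition subscal2 (M : opmx2) (a : K) : opmx2 :=
  fun i j x => M i j x - (if i == j then a *: x else 0).

Definition quadratic2 (M : opmx2) : Prop :=
  exists a b : K, mulop2 (subscal2 M a) (subscal2 M b) = fun _ _ _ => 0.

End Ops.

From HB Require Import structures.
From mathcomp Require Import all_boot all_order all_algebra.
From mathcomp Require Import all_classical all_reals all_analysis.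
From mathcomp Require Import complex ring lra.
Import Order.TTheory GRing.Theory Num.Theory.
Import numFieldNormedType.Exports.
Local Open Scope ring_scope.
Local Open Scope classical_set_scope.
Set Implicit Arguments. Unset Strict Implicit. Unset Printing Implicit Defensive.

(* The proof
   only tests phi on upper-triangular 2 x 2 blocks:
   - [[c, S], [0, c]] is always quadratic; [[T, I], [C, T]] is quadratic only if
     T is a scalar; and if [[Z, I], [Z, Z]] and [[Z, S], [Z, Z]] are quadratic with
     S not a scalar, then Z = 0 (section BlockMatrices).
   - Applying these to the images of [[0, S], [0, 0]] with phi S = I and with
     phi S a non-scalar operator of B gives phi 0 = 0; then [[c, U], [0, c]] with
     phi U = I shows that phi maps scalars to scalars, and [[T, I], [0, T]] with
     phi T = c gives the converse (section QuadraticPreservers).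
   - The non-scalar operator of B is a bounded rank-one operator x |-> f x *: x0.
     The bounded functional f with f x0 <> 0 comes from the Hahn-Banach theorem,
     proved by Zorn's lemma for real-linear functionals dominated by the norm and
     then complexified; this is done uniformly for K = R and K = C by working with
     an embedding R -> K and a real part K -> R (section RealStructure). *)

Section BlockMatrices.
Variables (K : numFieldType) (X : normedModType K).

Definition mx2 (a b c d : X -> X) : opmx2 X :=
  fun i j => if val i == 0%N then (if val j == 0%N then a else b)
             else (if val j == 0%N then c else d).

Definition zero_op : X -> X := fun _ => 0.
Definition scalar_op (c : K) : X -> X := scaleop c (@idop K X).

Lemma scalar_op0 : scalar_op 0 = zero_op.
Proof. by apply/funext => x; rewrite /scalar_op /scaleop scale0r. Qed.

Lemma scalar_op1 : scalar_op 1 = @idop K X.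
Proof. by apply/funext => x; rewrite /scalar_op /scaleop scale1r. Qed.

Lemma mulop2E (M N : opmx2 X) i j x :
  mulop2 M N i j x = M i ord0 (N ord0 j x) + M i ord_max (N ord_max j x).
Proof.
rewrite /mulop2 !big_ord_recl big_ord0 addr0.
by congr (_ + _); congr (M i _ (N _ j x)); apply: val_inj.
Qed.

Lemma bounded_op0 (S : X -> X) : bounded_op S -> S 0 = 0.
Proof.
move=> [linS _]; have := linS 1 0 0; rewrite !scale1r addr0 => h.
by apply: (addIr (S 0)); rewrite add0r -h.
Qed.

Lemma bounded_opZ (S : X -> X) (a : K) x : bounded_op S -> S (a *: x) = a *: S x.
Proof. by move=> bS; have := bS.1 a x 0; rewrite !addr0 (bounded_op0 bS) addr0. Qed.

(* [[c, S], [0, c]] is annihilated by its quadratic (X - c)^2. *)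
Lemma quadratic_scalar_block c S :
  bounded_op S -> quadratic2 (mx2 (scalar_op c) S zero_op (scalar_op c)).
Proof.
move=> bS; exists c, c; apply/funext => i; apply/funext => j; apply/funext => x.
rewrite mulop2E /subscal2 /mx2 /scalar_op /scaleop /idop /zero_op.
by case: i => [[|[|i]] Hi] //=; case: j => [[|[|j]] Hj] //=;
  rewrite ?subrr ?(bounded_op0 bS) ?subr0 ?scaler0 ?addr0 ?add0r ?subrr.
Qed.

(* If [[T, I], [C, T]] is quadratic with roots a, b, then the upper-right entry
   of (M - a)(M - b), namely 2T - (a + b), vanishes: T is a scalar. *)
Lemma scalar_of_quadratic_block T C :
  quadratic2 (mx2 T (@idop K X) C T) -> exists c, T = scalar_op c.
Proof.
move=> [a [b E]]; exists ((a + b) / 2); apply/funext => x.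
have := congr1 (fun M => M ord0 ord_max x) E.
rewrite mulop2E /subscal2 /mx2 /scalar_op /scaleop /idop /= !subr0 => h.
have h2 : (2 : K) *: T x = (a + b) *: x.
  rewrite scaler_nat mulr2n scalerDl; apply/eqP; rewrite -subr_eq0; apply/eqP.
  by rewrite -h opprD addrACA.
have n2 : (2 : K) != 0 by rewrite pnatr_eq0.
by rewrite mulrC -scalerA -h2 scalerA mulVf // scale1r.
Qed.

(* If [[Z, I], [Z, Z]] and [[Z, S], [Z, Z]] are quadratic with S not a scalar,
   then Z = 0: the first forces Z = c, and the upper-left entry of the second
   reads (c - a)(c - b) + c S = 0, which makes S scalar unless c = 0. *)
Lemma zero_of_quadratic_blocks Z S :
  quadratic2 (mx2 Z (@idop K X) Z Z) -> quadratic2 (mx2 Z S Z Z) ->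
  bounded_op S -> (forall k, S <> scalar_op k) -> Z = zero_op.
Proof.
move=> /scalar_of_quadratic_block [c ->] [a [b E]] bS nonscalarS.
suff -> : c = 0 by rewrite scalar_op0.
apply/eqP/negP => /negP cn0.
apply: (nonscalarS (- ((c - a) * (c - b)) / c)); apply/funext => x.
have := congr1 (fun M => M ord0 ord0 x) E.
rewrite mulop2E /subscal2 /mx2 /scalar_op /scaleop /idop /= !subr0.
rewrite (bounded_opZ _ _ bS) -!scalerBl scalerA => /eqP; rewrite addr_eq0 => /eqP h.
by apply: (scalerI cn0); rewrite scalerA mulrCA mulfV // mulr1 scaleNr h opprK.
Qed.

End BlockMatrices.

Arguments zero_op {K} X _.
Arguments scalar_op {K} X c.

(* K is viewed as an R-algebra through emb : R -> K, an isometric ring embedding,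
   with an R-linear "real part" re : K -> R that inverts emb on the nonnegative
   elements.  For K = R both maps are the identity (up to isomorphism); for
   K = C they are the inclusion of the reals and complex.Re. *)
Section RealStructure.
Variables (R : realType) (K : numFieldType) (X : normedModType K).
Variables (emb : R -> K) (re : K -> R).
Hypothesis embD : forall s t, emb (s + t) = emb s + emb t.
Hypothesis embM : forall s t, emb (s * t) = emb s * emb t.
Hypothesis emb1 : emb 1 = 1.
Hypothesis emb_norm : forall t, `|emb t| = emb `|t|.
Hypothesis reD : forall a b, re (a + b) = re a + re b.
Hypothesis reM : forall t a, re (emb t * a) = t * re a.
Hypothesis re_emb : forall t, re (emb t) = t.
Hypothesis re_ge0 : forall a, 0 <= a -> 0 <= re a /\ a = emb (re a).

Lemma emb0 : emb 0 = 0.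
Proof. by apply: (addIr (emb 0)); rewrite add0r -embD addr0. Qed.

Lemma embN t : emb (- t) = - emb t.
Proof. by apply/eqP; rewrite -addr_eq0 -embD addNr emb0. Qed.

Lemma embB s t : emb (s - t) = emb s - emb t.
Proof. by rewrite embD embN. Qed.

Lemma embV t : t != 0 -> emb t * emb t^-1 = 1.
Proof. by move=> t0; rewrite -embM mulfV // emb1. Qed.

Lemma embN1Z (x : X) : emb (-1) *: x = - x.
Proof. by rewrite embN emb1 scaleN1r. Qed.

Lemma re0 : re 0 = 0.
Proof. by rewrite -emb0 re_emb. Qed.

Lemma reN a : re (- a) = - re a.
Proof. by apply/eqP; rewrite -addr_eq0 -reD addNr re0. Qed.

Lemma ler_re a b : a <= b -> re a <= re b.
Proof. by rewrite -subr_ge0 => /re_ge0 [+ _]; rewrite reD reN subr_ge0. Qed.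

Lemma ler_emb s t : s <= t -> emb s <= emb t.
Proof.
rewrite -subr_ge0 -(subr_ge0 (emb s)) -embB => h.
by rewrite -(ger0_norm h) -emb_norm.
Qed.

Definition nrm (x : X) := re `|x|.

Lemma nrm_ge0 x : 0 <= nrm x.
Proof. by have [] := re_ge0 (normr_ge0 x). Qed.

Lemma nrm_triangle x y : nrm (x + y) <= nrm x + nrm y.
Proof. by rewrite /nrm -reD; apply/ler_re/ler_normD. Qed.

Lemma nrmZ t x : nrm (emb t *: x) = `|t| * nrm x.
Proof. by rewrite /nrm normrZ emb_norm reM. Qed.

Lemma nrmN x : nrm (- x) = nrm x.
Proof. by rewrite /nrm normrN. Qed.

Lemma nrm_gt0 x : x != 0 -> 0 < nrm x.
Proof.
move=> x0; rewrite lt_def nrm_ge0 andbT; apply/eqP => h.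
have [_ e] := re_ge0 (normr_ge0 x); move: e; rewrite -/(nrm x) h emb0.
by move/eqP; rewrite normr_eq0 (negbTE x0).
Qed.

(* Partial R-linear functionals dominated by nrm are handled through their
   graphs G : set (X * R). *)
Definition graph_functional (G : set (X * R)) :=
  forall x r s, G (x, r) -> G (x, s) -> r = s.
Definition graph_linear (G : set (X * R)) :=
  forall x r y s t, G (x, r) -> G (y, s) -> G (emb t *: x + y, t * r + s).
Definition graph_dominated (G : set (X * R)) :=
  forall x r, G (x, r) -> r <= nrm x.
Definition dominated_graph G :=
  [/\ graph_functional G, graph_linear G & graph_dominated G].

Variable x0 : X.
Hypothesis x0_neq0 : x0 != 0.

Definition seed : set (X * R) := fun p => exists t, p = (emb t *: x0, t * nrm x0).

Lemma dominated_seed : dominated_graph seed.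
Proof.
split.
- move=> x r s [t [-> ->]] [t' [e ->]]; congr (_ * _).
  move/eqP: e; rewrite -subr_eq0 -scalerBl scaler_eq0 (negbTE x0_neq0) orbF.
  by rewrite subr_eq0 => /eqP /(congr1 re); rewrite !re_emb.
- move=> x r y s t [u [-> ->]] [v [-> ->]]; exists (t * u + v).
  by rewrite scalerA -embM -scalerDl -embD mulrA mulrDl.
- move=> x r [t [-> ->]]; rewrite nrmZ.
  by apply: ler_wpM2r; [exact: nrm_ge0|exact: ler_norm].
Qed.

(* The property to which Zorn's lemma is applied; adjoining the seed makes the
   union of the empty chain admissible as well. *)
Definition admissible (G : set (X * R)) := dominated_graph (G `|` seed).

Lemma chain_two_points (F : set (set (X * R))) :
  F `<=` admissible -> total_on F subset ->
  forall p q, ((\bigcup_(G in F) G) `|` seed) p -> ((\bigcup_(G in F) G) `|` seed) q ->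
  exists H, [/\ dominated_graph H, H `<=` (\bigcup_(G in F) G) `|` seed, H p & H q].
Proof.
move=> Fadm tot p q.
have inU G : F G -> G `|` seed `<=` (\bigcup_(G in F) G) `|` seed.
  by move=> FG w [?|?]; [left; exists G|right].
move=> [[Gi Fi Gp]|sp] [[Gj Fj Gq]|sq].
- have [ij|ji] := tot _ _ Fi Fj.
  + by exists (Gj `|` seed); split; [exact: Fadm|exact: inU|left; exact: ij|left].
  + by exists (Gi `|` seed); split; [exact: Fadm|exact: inU|left|left; exact: ji].
- by exists (Gi `|` seed); split; [exact: Fadm|exact: inU|left|right].
- by exists (Gj `|` seed); split; [exact: Fadm|exact: inU|right|left].
- by exists seed; split; [exact: dominated_seed|move=> w ?; right| |].
Qed.

Lemma admissible_chain_union (F : set (set (X * R))) :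
  F `<=` admissible -> total_on F subset -> admissible (\bigcup_(G in F) G).
Proof.
move=> Fadm tot; have two := chain_two_points Fadm tot; split.
- move=> x r s hr hs; have [H [[Hf _ _] _ Hr Hs]] := two _ _ hr hs; exact: Hf Hr Hs.
- move=> x r y s t hr hs; have [H [[_ Hl _] HU Hr Hs]] := two _ _ hr hs.
  by apply: HU; apply: Hl Hr Hs.
- by move=> x r hr; have [H [[_ _ Hd] _ Hr _]] := two _ _ hr hr; exact: Hd Hr.
Qed.

Section OneStepExtension.
Variable M : set (X * R).
Hypothesis domM : dominated_graph M.
Hypothesis M00 : M (0, 0).
Variable z : X.

Definition extend (c : R) : set (X * R) :=
  fun p => exists t y s, M (y, s) /\ p = (emb t *: z + y, t * c + s).

Lemma subset_extend c : M `<=` extend c.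
Proof.
move=> [y s] hy; exists 0, y, s; split => //.
by rewrite emb0 scale0r add0r mul0r add0r.
Qed.

Lemma extension_value : exists c, forall y s, M (y, s) ->
  s - nrm (y - z) <= c /\ c <= nrm (y + z) - s.
Proof.
have [_ Ml Md] := domM.
have sep y s y' s' : M (y, s) -> M (y', s') -> s - nrm (y - z) <= nrm (y' + z) - s'.
  move=> hy hy'; have := Md _ _ (Ml _ _ _ _ 1 hy hy'); rewrite emb1 scale1r mul1r.
  have -> : y + y' = (y - z) + (y' + z) by rewrite addrACA addNr addr0.
  have := nrm_triangle (y - z) (y' + z); lra.
pose L := fun u => exists y s, M (y, s) /\ u = s - nrm (y - z).
have L_neq0 : L !=set0 by exists (0 - nrm (0 - z)); exists 0, 0.
have L_ub : has_ubound L.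
  by exists (nrm (0 + z) - 0) => _ [y [s [hy ->]]]; apply: sep hy M00.
exists (sup L) => y s hy; split; first by apply: ub_le_sup L_ub _ _; exists y, s.
by apply: ge_sup L_neq0 _ => _ [y' [s' [hy' ->]]]; apply: sep hy' hy.
Qed.

Lemma extend_functional c : ~ (exists r, M (z, r)) -> graph_functional (extend c).
Proof.
have [Mf Ml _] := domM.
move=> zM x r r' [t [y [s [hy /pair_equal_spec [ex ->]]]]].
move=> [t' [y' [s' [hy' /pair_equal_spec [ex' ->]]]]].
have [tt'|tt'] := eqVneq t t'.
  subst t'; have yy' : y = y' by apply: (addrI (emb t *: z)); rewrite -ex.
  by subst y'; rewrite (Mf _ _ _ hy hy').
exfalso; apply: zM.
have ey : y' - y = (emb t - emb t') *: z.
  by rewrite scalerBl; apply/eqP; rewrite subr_eq addrAC -ex ex' [emb t' *: z + y']addrC addrK.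
exists ((t - t')^-1 * (-1 * s + s') + 0).
have := Ml _ _ _ _ (t - t')^-1 (Ml _ _ _ _ (-1) hy hy') M00.
rewrite addr0 embN1Z [- y + y']addrC ey scalerA -embB.
by rewrite mulrC embV ?subr_eq0 // scale1r.
Qed.

Lemma extend_linear c : graph_linear (extend c).
Proof.
have [_ Ml _] := domM.
move=> x r y s u [t [y1 [s1 [h1 [-> ->]]]]] [t' [y2 [s2 [h2 [-> ->]]]]].
exists (u * t + t'), (emb u *: y1 + y2), (u * s1 + s2); split; first exact: Ml.
congr (_, _); last by ring.
by rewrite scalerDr scalerA -embM embD scalerDl addrACA.
Qed.

(* Domination of t z + y splits according to the sign of t; after rescaling
   by 1/|t| it is one of the two inequalities bounding c. *)
Lemma extend_dominated c : (forall y s, M (y, s) ->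
    s - nrm (y - z) <= c /\ c <= nrm (y + z) - s) ->
  graph_dominated (extend c).
Proof.
have [_ Ml Md] := domM.
move=> cb x r [t [y [s [hy [-> ->]]]]].
have [->|tn0] := eqVneq t 0.
  by rewrite emb0 scale0r add0r mul0r add0r; apply: Md.
have hy1 : M (emb t^-1 *: y, t^-1 * s).
  by have := Ml _ _ _ _ t^-1 hy M00; rewrite !addr0.
have hy2 : M (emb (- t^-1) *: y, - t^-1 * s).
  by have := Ml _ _ _ _ (- t^-1) hy M00; rewrite !addr0.
have ey : emb t *: z + y = emb t *: (emb t^-1 *: y + z).
  by rewrite scalerDr scalerA embV // scale1r addrC.
have es : s = t * (t^-1 * s) by rewrite mulrA mulfV // mul1r.
rewrite ey nrmZ; rewrite mulNr in hy2.
move: hy1 hy2 es; move: (t^-1 * s) => s1 hy1 hy2 ->.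
have [tpos|tneg] := ltrP 0 t.
  by have [_] := cb _ _ hy1; rewrite gtr0_norm //; nra.
have tlt : t < 0 by rewrite lt_neqAle tn0 tneg.
have [+ _] := cb _ _ hy2.
have -> : emb (- t^-1) *: y - z = - (emb t^-1 *: y + z) by rewrite embN scaleNr opprD.
by rewrite nrmN ltr0_norm //; nra.
Qed.

Lemma dominated_extension : ~ (exists r, M (z, r)) ->
  exists c, dominated_graph (extend c).
Proof.
move=> zM; have [c cb] := extension_value.
by exists c; split; [exact: extend_functional|exact: extend_linear|exact: extend_dominated].
Qed.

End OneStepExtension.

Lemma maximal_graph_total (M0 : set (X * R)) :
  admissible M0 -> (forall G, M0 `<` G -> ~ admissible G) ->
  forall x, exists r, (M0 `|` seed) (x, r).
Proof.
move=> admM0 maxM0 z; set M := M0 `|` seed.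
have seedM : seed `<=` M by move=> p ?; right.
have M00 : M (0, 0) by apply: seedM; exists 0; rewrite emb0 scale0r mul0r.
apply: contrapT => zM; have [c domE] := dominated_extension admM0 M00 zM.
have ME := subset_extend (M := M) z c.
apply: (maxM0 (extend M z c)).
  split; first by move=> p hp; apply: ME; left.
  move=> /(_ (z, c)) zc; apply: zM; exists c; left; apply: zc.
  exists 1, 0, 0; split => //.
  by rewrite emb1 scale1r addr0 mul1r addr0.
by rewrite /admissible setUidl // => p /seedM /ME.
Qed.

Lemma real_hahn_banach : exists h : X -> R,
  [/\ (forall t x y, h (emb t *: x + y) = t * h x + h y),
      (forall x, h x <= nrm x) & h x0 = nrm x0].
Proof.
have [M0 [admM0 maxM0]] := Zorn_bigcup admissible_chain_union.
have [Mf Ml Md] := admM0.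
have total := maximal_graph_total admM0 maxM0.
pose h x := projT1 (cid (total x)).
have hM x : (M0 `|` seed) (x, h x) by rewrite /h; case: cid.
exists h; split.
- by move=> t x y; apply: (Mf (emb t *: x + y)); [exact: hM|exact: Ml (hM x) (hM y)].
- by move=> x; apply: Md (hM x).
- apply: (Mf x0); first exact: hM.
  by right; exists 1; rewrite emb1 scale1r mul1r.
Qed.

Variable iK : K.
Hypothesis K_decomp : (iK = 0 /\ forall a, a = emb (re a)) \/
  (iK * iK = -1 /\ forall a, a = emb (re a) + iK * emb (re (- iK * a))).
Hypothesis re_iK : re iK = 0.

(* The K-linear functional whose real part is the R-linear functional h. *)
Definition complexify (h : X -> R) (x : X) : K := emb (h x) - iK * emb (h (iK *: x)).

Lemma re_complexify h x : re (complexify h x) = h x.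
Proof. by rewrite /complexify reD reN mulrC reM re_iK mulr0 re_emb subr0. Qed.

Section Complexify.
Variable h : X -> R.
Hypothesis h_linear : forall t x y, h (emb t *: x + y) = t * h x + h y.

Let h0 : h 0 = 0.
Proof.
have := h_linear 1 0 0; rewrite emb1 scale1r addr0 mul1r => e.
by apply: (addIr (h 0)); rewrite add0r -e.
Qed.

Let hD x y : h (x + y) = h x + h y.
Proof. by have := h_linear 1 x y; rewrite emb1 scale1r mul1r. Qed.

Let hZ t x : h (emb t *: x) = t * h x.
Proof. by have := h_linear t x 0; rewrite addr0 h0 addr0. Qed.

Lemma complexify_linear a u v :
  complexify h (a *: u + v) = a * complexify h u + complexify h v.
Proof.
have FD x y : complexify h (x + y) = complexify h x + complexify h y.
  by rewrite /complexify scalerDr !hD !embD; ring.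
rewrite FD; congr (_ + _); rewrite /complexify.
case: K_decomp => [[-> realK]|[iK2 decK]].
  by rewrite !mul0r !subr0 {1}(realK a) hZ embM -realK.
move: (re a) (re (- iK * a)) (decK a) => s t ->.
have e1 : (emb s + iK * emb t) *: u = emb s *: u + emb t *: (iK *: u).
  by rewrite scalerDl [iK * _]mulrC -scalerA.
have e2 : iK *: ((emb s + iK * emb t) *: u) = emb s *: (iK *: u) + emb (- t) *: u.
  by rewrite scalerA [in RHS]scalerA -scalerDl embN; congr (_ *: _); ring: iK2.
by rewrite e2 e1 !hD !hZ !embD !embM !embN; ring: iK2.
Qed.

Hypothesis h_dominated : forall x, h x <= nrm x.

Lemma complexify_bounded x : `|complexify h x| <= (1 + `|iK| * `|iK|) * `|x|.
Proof.
have hN y : h (- y) = - h y by rewrite -embN1Z hZ mulN1r.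
have embh y : `|emb (h y)| <= `|y|.
  have hle : `|h y| <= nrm y.
    by rewrite ler_norml h_dominated andbT lerNl -hN -(nrmN y) h_dominated.
  by rewrite emb_norm; have [_ ->] := re_ge0 (normr_ge0 y); exact: ler_emb.
rewrite /complexify (le_trans (ler_normB _ _)) // normrM mulrDl mul1r.
apply: lerD; first exact: embh.
by rewrite -mulrA; apply: ler_wpM2l; rewrite ?normr_ge0 // -normrZ embh.
Qed.

End Complexify.

Lemma lipschitz_continuous (V W : normedModType K) (f : V -> W) (C : K) : 0 < C ->
  (forall x y, `|f x - f y| <= C * `|x - y|) -> continuous f.
Proof.
move=> C0 lipf x; apply/cvgrPdist_lt => e e0.
have Ce0 : 0 < C^-1 * e by rewrite mulr_gt0 ?invr_gt0.
have near_x := (cvgrPdist_lt _ _).1 (@cvg_id _ (nbhs x)) _ Ce0.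
near=> y; apply: (le_lt_trans (lipf x y)).
by rewrite -ltr_pdivlMl //; near: y; exact: near_x.
Unshelve. all: by end_near.
Qed.

Lemma nonscalar_rank_one (x1 : X) : (forall k : K, x1 <> k *: x0) ->
  exists S : X -> X, [/\ bounded_op S, finite_rank S & forall k, S <> scalar_op X k].
Proof.
move=> x1_indep.
have [h [h_linear h_dominated hx0]] := real_hahn_banach.
pose F := complexify h; pose S x := F x *: x0.
have Fx0 : F x0 != 0.
  apply/eqP => e; have := re_complexify h x0; rewrite -/F e re0 hx0 => /esym/eqP.
  by rewrite (gt_eqF (nrm_gt0 x0_neq0)).
have S_linear a u v : S (a *: u + v) = a *: S u + S v.
  by rewrite /S /F complexify_linear // scalerDl scalerA.
have SB x y : S x - S y = S (x - y).
  by rewrite (addrC x) -[- y]scaleN1r S_linear scaleN1r addrC.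
exists S; split.
- split=> //; pose C := (1 + `|iK| * `|iK|) * `|x0| + 1.
  have C0 : 0 < C by rewrite ltr_pwDr // mulr_ge0 // addr_ge0 // mulr_ge0.
  apply: (lipschitz_continuous C0) => x y; rewrite SB /S normrZ mulrC.
  apply: (le_trans (ler_wpM2l (normr_ge0 x0) (complexify_bounded h_linear h_dominated _))).
  by rewrite mulrA ler_wpM2r ?normr_ge0 // mulrC lerDl.
- by exists 1, (fun _ => x0) => x; exists (fun _ => F x); rewrite big_ord1.
- move=> k e.
  have := congr1 (fun f => f x0) e; have := congr1 (fun f => f x1) e.
  rewrite /S /scalar_op /scaleop /idop /= => e1 e0.
  have kF : k = F x0.
    move/eqP: e0; rewrite -subr_eq0 -scalerBl scaler_eq0 (negbTE x0_neq0) orbF.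
    by rewrite subr_eq0 => /eqP.
  have kn0 : k != 0 by rewrite kF.
  apply: (x1_indep (F x1 / k)); apply: (scalerI kn0).
  by rewrite -e1 scalerA mulrCA mulfV // mulr1.
Qed.

End RealStructure.

Lemma independent_pair (K : numFieldType) (Y : normedModType K) :
  infinite_dimensional Y -> exists x0 x1 : Y, x0 != 0 /\ forall k : K, x1 <> k *: x0.
Proof.
move=> Yinf; have [x0 x0_span] := Yinf 0 (fun _ => 0).
have [x1 x1_span] := Yinf 1 (fun _ => x0).
exists x0, x1; split.
  by apply/eqP => e; apply: (x0_span (fun _ => 0)); rewrite big_ord0.
by move=> k e; apply: (x1_span (fun _ => k)); rewrite big_ord1.
Qed.

Section ComplexFacts.
Local Open Scope complex_scope.
Variable R : rcfType.
Implicit Types (t : R) (z : R[i]).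

Lemma Re_realM t z : complex.Re (t%:C * z) = t * complex.Re z.
Proof. by case: z => x y; simpc. Qed.

Lemma Re_Ni z : complex.Re (- 'i * z) = complex.Im z.
Proof. by case: z => x y; simpc. Qed.

Lemma norm_real t : `|t%:C| = `|t|%:C :> R[i].
Proof. by rewrite normc_def /= expr0n addr0 sqrtr_sqr. Qed.

Lemma ge0_real z : 0 <= z -> 0 <= complex.Re z /\ z = (complex.Re z)%:C.
Proof.
rewrite lecE => /andP [/eqP Im0 Re_ge0]; split => //.
by case: z Im0 {Re_ge0} => x y /= ->.
Qed.

End ComplexFacts.

(* Over R or C, infinite-dimensional normed spaces carry bounded finite-rank
   operators that are not scalars: transport the real structure of R or C
   along the isometric isomorphism with K and apply nonscalar_rank_one. *)
Lemma nonscalar_finite_rank (R : realType) (K : numFieldType) (HK : R_or_C R K)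
  (Y : normedModType K) (HY : infinite_dimensional Y) :
  exists S : Y -> Y, [/\ bounded_op S, finite_rank S & forall k, S <> scalar_op Y k].
Proof.
have [x0 [x1 [x0_neq0 x1_indep]]] := independent_pair HY.
case: HK => [[f [[g fK gK] f_norm]]|[f [[g fK gK] f_norm]]]; have f_inj := can_inj fK.
- apply: (@nonscalar_rank_one R K Y g f _ _ _ _ _ _ _ _ x0 x0_neq0 0 _ _ x1 x1_indep).
  + by move=> s t; apply: f_inj; rewrite rmorphD !gK.
  + by move=> s t; apply: f_inj; rewrite rmorphM !gK.
  + by apply: f_inj; rewrite rmorph1 gK.
  + by move=> t; apply: f_inj; rewrite -f_norm !gK.
  + by move=> a b; rewrite rmorphD.
  + by move=> t a; rewrite rmorphM gK.
  + by move=> t; rewrite gK.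
  + move=> a a_ge0; rewrite fK; split => //.
    by have := normr_ge0 (f a); rewrite f_norm ger0_norm.
  + by left; split => // a; rewrite fK.
  + by rewrite rmorph0.
- apply: (@nonscalar_rank_one R K Y (fun t => g t%:C%C) (fun a => complex.Re (f a))
     _ _ _ _ _ _ _ _ x0 x0_neq0 (g 'i%C) _ _ x1 x1_indep).
  + by move=> s t; apply: f_inj; rewrite !rmorphD !gK.
  + by move=> s t; apply: f_inj; rewrite !rmorphM !gK.
  + by apply: f_inj; rewrite !rmorph1 gK.
  + by move=> t; apply: f_inj; rewrite -f_norm !gK norm_real.
  + by move=> a b; rewrite !raddfD.
  + by move=> t a; rewrite rmorphM gK Re_realM.
  + by move=> t; rewrite gK.
  + move=> a a_ge0; have : 0 <= f a.
      by have := normr_ge0 (f a); rewrite f_norm ger0_norm.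
    by move=> /ge0_real [Re_ge0 e]; split => //; rewrite -e fK.
  + right; split.
      by apply: f_inj; rewrite rmorphM gK -expr2 sqr_i rmorphN1.
    move=> a; apply: f_inj; rewrite rmorphD rmorphM !gK rmorphM rmorphN gK Re_Ni.
    exact: complexE.
  + by rewrite gK.
Qed.

Section QuadraticPreservers.
Variables (K : numFieldType) (X Y : normedModType K).
Variables (A : set (X -> X)) (B : set (Y -> Y)) (phi : (X -> X) -> (Y -> Y)).
Hypothesis phi_quadratic2 : forall M : opmx2 X, (forall i j, A (M i j)) ->
  (quadratic2 M <-> quadratic2 (fun i j => phi (M i j))).
Hypothesis A_bounded : forall T, A T -> bounded_op T.
Hypothesis A_scalar : forall c, A (scalar_op X c).
Hypothesis B_image : B `<=` phi @` A.

Lemma A_zero : A (zero_op X).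
Proof. by rewrite -scalar_op0. Qed.

Lemma quadratic_block_transfer a b c d : A a -> A b -> A c -> A d ->
  quadratic2 (mx2 a b c d) <-> quadratic2 (mx2 (phi a) (phi b) (phi c) (phi d)).
Proof.
move=> Aa Ab Ac Ad.
have -> : mx2 (phi a) (phi b) (phi c) (phi d) = (fun i j => phi (mx2 a b c d i j)).
  by apply/funext => i; apply/funext => j; rewrite /mx2; case: ifP; case: ifP.
by apply: phi_quadratic2 => i j; rewrite /mx2; case: ifP; case: ifP.
Qed.

(* For every S' = phi S in B, [[0, S], [0, 0]] is quadratic, hence so is
   [[phi 0, S'], [phi 0, phi 0]]; taking S' = I and S' non-scalar gives phi 0 = 0. *)
Lemma phi_zero (S' : Y -> Y) : B (@idop K Y) -> B S' -> bounded_op S' ->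
  (forall k, S' <> scalar_op Y k) -> phi (zero_op X) = zero_op Y.
Proof.
have Q T : B T -> quadratic2 (mx2 (phi (zero_op X)) T (phi (zero_op X)) (phi (zero_op X))).
  move=> /B_image [S AS <-]; apply/(quadratic_block_transfer A_zero AS A_zero A_zero).
  by have := quadratic_scalar_block 0 (A_bounded AS); rewrite scalar_op0.
by move=> BI BS'; apply: zero_of_quadratic_blocks (Q _ BI) (Q _ BS').
Qed.

Hypothesis phi0 : phi (zero_op X) = zero_op Y.

(* With phi U = I, [[c, U], [0, c]] is quadratic, so is [[phi c, I], [0, phi c]]. *)
Lemma phi_scalar c : B (@idop K Y) -> exists c', phi (scalar_op X c) = scalar_op Y c'.
Proof.
move=> /B_image [U AU phiU]; apply: (@scalar_of_quadratic_block _ _ _ (zero_op Y)).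
rewrite -phiU -phi0; apply/(quadratic_block_transfer (A_scalar c) AU A_zero (A_scalar c)).
exact: quadratic_scalar_block (A_bounded AU).
Qed.

(* Conversely, if phi T = c then [[phi T, phi I], [0, phi T]] is quadratic, so is
   [[T, I], [0, T]], and T is a scalar. *)
Lemma scalar_of_phi_scalar T c : A T -> A (@idop K X) -> bounded_op (phi (@idop K X)) ->
  phi T = scalar_op Y c -> exists c', T = scalar_op X c'.
Proof.
move=> AT AI bphiI phiT; apply: (@scalar_of_quadratic_block _ _ _ (zero_op X)).
apply/(quadratic_block_transfer AT AI A_zero AT); rewrite phiT phi0.
exact: quadratic_scalar_block.
Qed.

End QuadraticPreservers.

Theorem lemma2p1 (R : realType) (K : numFieldType) (HK : R_or_C R K)
  (X Y : completeNormedModType K)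
  (HX : infinite_dimensional X) (HY : infinite_dimensional Y)
  (A : set (X -> X)) (B : set (Y -> Y))
  (HA : standard_op_alg A) (HB : standard_op_alg B)
  (phi : (X -> X) -> (Y -> Y)) (Hphi : set_bij A B phi)
  (Hq : forall M : opmx2 X, (forall i j, A (M i j)) ->
          (quadratic2 M <-> quadratic2 (fun i j => phi (M i j)))) :
  phi (fun _ => 0) = (fun _ => 0) /\
  phi @` [set scaleop a (@idop K X) | a in [set: K]] = [set scaleop a (@idop K Y) | a in [set: K]] /\
  exists lambda : K, phi (@idop K X) = scaleop lambda (@idop K Y).
Proof.
have [A_bounded [_ [A_scale [_ [AI _]]]]] := HA.
have [B_bounded [_ [B_scale [_ [BI [B_finite_rank _]]]]]] := HB.
have [phi_AB _ B_image] := Hphi.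
have A_scalar c : A (scalar_op X c) by exact: A_scale.
have [S [bS frS nonscalarS]] := nonscalar_finite_rank HK HY.
have phi0 : phi (zero_op X) = zero_op Y.
  exact: (phi_zero Hq A_bounded A_scalar B_image BI (B_finite_rank _ bS frS) bS nonscalarS).
have phi_sc c := phi_scalar Hq A_bounded A_scalar B_image phi0 c BI.
split; first exact: phi0.
split; last by have [c] := phi_sc 1; rewrite scalar_op1 => ->; exists c.
apply/seteqP; split=> [_ [_ [c _ <-] <-]|_ [c _ <-]].
  by have [c' ->] := phi_sc c; exists c'.
have [T AT phiT] := B_image _ (B_scale c _ BI).
have [c' Tc'] := scalar_of_phi_scalar Hq A_scalar phi0 AT AI
  (B_bounded _ (phi_AB _ AI)) phiT.
by exists T => //; exists c'.
Qed.
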